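(* Let $A=\{a,b_1,b_2,b_3,c_1,c_2,c_3,d_1,d_2,d_3\}$ and let $M$ be the monoid presented by $\langle A\mid b_ia=ab_i\ (i=1,2,3),\ c_jb_j=c_1b_1\ (j=2,3),\ b_jd_j=b_1d_1\ (j=2,3)\rangle$. Then $M$ is biautomatic (and hence automatic).
   Context: Automatic/biautomatic: for a finite generating alphabet $A$ of $M$ and regular $L\subseteq A^*$ mapping onto $M$, set $L_a=\{(u,v)\in L^2: ua=_Mv\}$, ${}_aL=\{(u,v)\in L^2: au=_Mv\}$ ($a\in A\cup\{\varepsilon\}$); $\delta_R$ ($\delta_L$) converts a pair of words into a word over pairs of letters by padding the shorter word at the end (beginning) with a new symbol $\$$. $M$ is automatic if for some such $(A,L)$ all $L_a\delta_R$ are regular; biautomatic if for some such $(A,L)$ all $L_a\delta_R,{}_aL\delta_R,L_a\delta_L,{}_aL\delta_L$ are regular. *)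

From mathcomp Require Import all_boot.
From Stdlib Require Import Relations.
Set Implicit Arguments. Unset Strict Implicit. Unset Printing Implicit Defensive.

Definition regular (T : finType) (L : seq T -> Prop) : Prop :=
  exists (Q : finType) (q0 : Q) (d : Q -> T -> Q) (F : pred Q),
    forall w, L w <-> F (foldl d q0 w).

Inductive rstep (A : Type) (R : seq A -> seq A -> Prop) : seq A -> seq A -> Prop :=
| rstep_intro u v l r : R l r -> rstep R (u ++ l ++ v) (u ++ r ++ v).

Definition eqM (A : Type) (R : seq A -> seq A -> Prop) : seq A -> seq A -> Prop :=
  clos_refl_sym_trans (seq A) (rstep R).

(** Padding: None plays the role of the new symbol $. *)
Definition deltaR (B : Type) (u v : seq B) : seq (option B * option B) :=
  let n := maxn (size u) (size v) in
  zip (map Some u ++ nseq (n - size u) None) (map Some v ++ nseq (n - size v) None).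

Definition deltaL (B : Type) (u v : seq B) : seq (option B * option B) :=
  let n := maxn (size u) (size v) in
  zip (nseq (n - size u) None ++ map Some u) (nseq (n - size v) None ++ map Some v).

Definition padlang (B : Type) (pad : seq B -> seq B -> seq (option B * option B))
  (P : seq B -> seq B -> Prop) : seq (option B * option B) -> Prop :=
  fun w => exists u v, P u v /\ w = pad u v.

(** A generating alphabet of M = <A|R> is a finite type B with a map
    phi : B -> M, each letter sent to (the class of) a word over A. *)
Definition evalw (A : Type) (B : Type) (phi : B -> seq A) (u : seq B) : seq A :=
  flatten (map phi u).

(** a : option B, with None standing for the empty word epsilon. *)
Definition letter (B : Type) (a : option B) : seq B :=
  if a is Some b then [:: b] else [::].

Definition Lright (A : Type) (R : seq A -> seq A -> Prop) (B : Type) (phi : B -> seq A)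
  (L : seq B -> Prop) (a : option B) (u v : seq B) : Prop :=
  L u /\ L v /\ eqM R (evalw phi (u ++ letter a)) (evalw phi v).

Definition Lleft (A : Type) (R : seq A -> seq A -> Prop) (B : Type) (phi : B -> seq A)
  (L : seq B -> Prop) (a : option B) (u v : seq B) : Prop :=
  L u /\ L v /\ eqM R (evalw phi (letter a ++ u)) (evalw phi v).

Definition maps_onto (A : Type) (R : seq A -> seq A -> Prop) (B : Type) (phi : B -> seq A)
  (L : seq B -> Prop) : Prop :=
  forall w : seq A, exists u, L u /\ eqM R (evalw phi u) w.

Definition automatic (A : Type) (R : seq A -> seq A -> Prop) : Prop :=
  exists (B : finType) (phi : B -> seq A) (L : seq B -> Prop),
    regular L /\ maps_onto R phi L /\
    forall a : option B, regular (padlang (@deltaR B) (Lright R phi L a)).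

Definition biautomatic (A : Type) (R : seq A -> seq A -> Prop) : Prop :=
  exists (B : finType) (phi : B -> seq A) (L : seq B -> Prop),
    regular L /\ maps_onto R phi L /\
    forall a : option B,
      [/\ regular (padlang (@deltaR B) (Lright R phi L a)),
          regular (padlang (@deltaR B) (Lleft R phi L a)),
          regular (padlang (@deltaL B) (Lright R phi L a)) &
          regular (padlang (@deltaL B) (Lleft R phi L a))].

Inductive gen : Type :=
| ga | gb1 | gb2 | gb3 | gc1 | gc2 | gc3 | gd1 | gd2 | gd3.

Inductive M_rel : seq gen -> seq gen -> Prop :=
| rel_b1a : M_rel [:: gb1; ga] [:: ga; gb1]
| rel_b2a : M_rel [:: gb2; ga] [:: ga; gb2]
| rel_b3a : M_rel [:: gb3; ga] [:: ga; gb3]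
| rel_c2b2 : M_rel [:: gc2; gb2] [:: gc1; gb1]
| rel_c3b3 : M_rel [:: gc3; gb3] [:: gc1; gb1]
| rel_b2d2 : M_rel [:: gb2; gd2] [:: gb1; gd1]
| rel_b3d3 : M_rel [:: gb3; gd3] [:: gb1; gd1].

From mathcomp Require Import all_boot.
From Stdlib Require Import Setoid Relations.
From HB Require Import structures.
Set Implicit Arguments. Unset Strict Implicit. Unset Printing Implicit Defensive.

(* All defining relations of M preserve length, so in [L_a] and [_aL] the word v
   is one letter longer than u; the right- and left-padded encodings then differ
   only by shifting one track by one position, and it suffices to show that [L_a]
   is right-padded regular and [_aL] left-padded regular.  For L we take the
   normal forms computed by multiplying letters in from the left with an explicit
   normalisation: b_i moves to the right of the following a's, b_i d_i becomes
   b_1 d_1, c_i a^k b_i becomes c_1 a^k b_1, and c_1 a^k b_1 d_j becomes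
   c_j a^k b_1 d_1.  Normality is decided by finitely much right context, so L is
   regular.  Multiplying a normal form by a letter on either side only rewrites a
   bounded region around one block a^k, so the graph of the multiplication is
   contained in a padded-regular relation built from diagonals and pairs
   (x a^k x', y a^k y'); intersected with L x L it is exactly [L_a], resp. [_aL],
   because normal forms are unique. *)

(** * Closure properties of regular languages *)

Section RegularClosure.
Variable T : finType.
Implicit Types P Q : seq T -> Prop.

Lemma regular_ext P Q : (forall w, P w <-> Q w) -> regular P -> regular Q.
Proof.
move=> PQ [S [q0 [d [F H]]]]; exists S, q0, d, F => w.
by rewrite -PQ.
Qed.

Lemma foldl_pair (S1 S2 : Type) (d1 : S1 -> T -> S1) (d2 : S2 -> T -> S2) p1 p2 w :
  foldl (fun q t => (d1 q.1 t, d2 q.2 t)) (p1, p2) w = (foldl d1 p1 w, foldl d2 p2 w).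
Proof. by elim: w p1 p2 => //= t w IH p1 p2; rewrite IH. Qed.

Lemma regular_and P Q : regular P -> regular Q -> regular (fun w => P w /\ Q w).
Proof.
move=> [S1 [q1 [d1 [F1 H1]]]] [S2 [q2 [d2 [F2 H2]]]].
exists (S1 * S2)%type, (q1, q2), (fun q t => (d1 q.1 t, d2 q.2 t)),
  (fun q => F1 q.1 && F2 q.2) => w.
by rewrite foldl_pair H1 H2; split=> [[-> ->] | /andP].
Qed.

Lemma regular_or P Q : regular P -> regular Q -> regular (fun w => P w \/ Q w).
Proof.
move=> [S1 [q1 [d1 [F1 H1]]]] [S2 [q2 [d2 [F2 H2]]]].
exists (S1 * S2)%type, (q1, q2), (fun q t => (d1 q.1 t, d2 q.2 t)),
  (fun q => F1 q.1 || F2 q.2) => w.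
by rewrite foldl_pair H1 H2; split=> [[] -> | /orP]; rewrite ?orbT; auto.
Qed.

Lemma regular_all (p : pred T) : regular (fun w => all p w).
Proof.
exists bool, true, (fun b t => b && p t), id => w /=.
suff -> : forall b, foldl (fun b t => b && p t) b w = b && all p w by [].
by elim: w => //= [b | t w IH b]; rewrite ?andbT // IH andbA.
Qed.

Lemma regular_letter (t0 : T) : regular (fun w => w = [:: t0]).
Proof.
pose d (q : option bool) t := if (q == Some false) && (t == t0) then Some true else None.
exists (option bool), (Some false), d, (fun q => q == Some true) => w.
have stuck w' : foldl d None w' = None by elim: w'.
case: w => [|t [|t' w]]; first by split.
  by rewrite /= /d /=; case: (t =P t0) => [-> | ne]; split=> // -[].
by rewrite /= /d /=; case: (t =P t0) => _; rewrite stuck; split.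
Qed.

Lemma regular_rev P : regular P -> regular (fun w => P (rev w)).
Proof.
move=> [S [q0 [d [F H]]]].
pose step (X : {set S}) t := [set q | d q t \in X].
exists {set S}%type, [set q | F q], step, (fun X : {set S} => q0 \in X) => w.
suff -> : forall q, (q \in foldl step [set q | F q] w) = F (foldl d q (rev w)) by [].
elim/last_ind: w => [|w t IH] q; first by rewrite inE.
by rewrite -cats1 foldl_cat /= inE IH rev_cat.
Qed.

Lemma regular_pmap (T' : finType) (f : T' -> option T) P :
  regular P -> regular (fun w : seq T' => P (pmap f w)).
Proof.
move=> [S [q0 [d [F H]]]].
pose step q t := if f t is Some x then d q x else q.
exists S, q0, step, F => w.
suff -> : forall q, foldl step q w = foldl d q (pmap f w) by [].
by elim: w => //= t w IH q; rewrite IH /step; case: (f t).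
Qed.

Section Concatenation.
Variables (S1 S2 : finType) (q1 : S1) (q2 : S2).
Variables (d1 : S1 -> T -> S1) (d2 : S2 -> T -> S2) (F1 : pred S1).

(* Subset construction: the second component collects the states of the second
   automaton reached from every split point accepted by the first one. *)
Definition cat_step (st : S1 * {set S2}) t :=
  (d1 st.1 t, [set d2 q t | q in st.2] :|: (if F1 (d1 st.1 t) then [set q2] else set0)).

Definition cat_init : S1 * {set S2} := (q1, if F1 q1 then [set q2] else set0).

Lemma cat_run_fst w : (foldl cat_step cat_init w).1 = foldl d1 q1 w.
Proof. by elim/last_ind: w => // w t IH; rewrite -cats1 !foldl_cat /= IH. Qed.

Lemma cat_run_snd w q : q \in (foldl cat_step cat_init w).2 <->
  exists w1 w2, [/\ w = w1 ++ w2, F1 (foldl d1 q1 w1) & q = foldl d2 q2 w2].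
Proof.
elim/last_ind: w q => [|w t IH] q.
  rewrite /=; split=> [|[[|? ?] [[|? ?] [//= _ F ->]]]]; last by rewrite F inE.
  by case: ifP; rewrite ?inE // => F /eqP ->; exists [::], [::].
rewrite -cats1 foldl_cat /= inE cat_run_fst.
have -> : d1 (foldl d1 q1 w) t = foldl d1 q1 (w ++ [:: t]) by rewrite foldl_cat.
split=> [/orP[/imsetP[q' /IH[w1 [w2 [-> F ->]]] ->] | ] | [w1 [w2 [E F ->]]]].
- by exists w1, (w2 ++ [:: t]); rewrite catA foldl_cat.
- by case: ifP; rewrite ?inE // => F /eqP ->; exists (w ++ [:: t]), [::]; rewrite cats0.
case/lastP: w2 E => [|w2 t2]; rewrite ?cats0 => E.
  by rewrite E F inE eqxx orbT.
move/eqP: E; rewrite cats1 -rcons_cat eqseq_rcons => /andP[/eqP Ew /eqP <-].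
apply/orP; left; apply/imsetP; exists (foldl d2 q2 w2); first by apply/IH; exists w1, w2.
by rewrite -cats1 foldl_cat.
Qed.

End Concatenation.

Lemma regular_cat P Q : regular P -> regular Q ->
  regular (fun w => exists w1 w2, [/\ w = w1 ++ w2, P w1 & Q w2]).
Proof.
move=> [S1 [q1 [d1 [F1 H1]]]] [S2 [q2 [d2 [F2 H2]]]].
exists (S1 * {set S2})%type, (cat_init q1 q2 F1), (cat_step q2 d1 d2 F1),
  (fun st : S1 * {set S2} => [exists q in st.2, F2 q]) => w; split.
  move=> [w1 [w2 [-> /H1 P1 /H2 Q2]]]; apply/exists_inP; exists (foldl d2 q2 w2) => //.
  by apply/cat_run_snd; exists w1, w2.
move=> /exists_inP [q /cat_run_snd [w1 [w2 [-> /H1 P1 ->]]] /H2 Q2].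
by exists w1, w2.
Qed.

Lemma regular_word (c : seq T) : regular (fun w => w = c).
Proof.
elim: c => [|t c IH].
  by apply: regular_ext (regular_all xpred0) => -[|? ?]; split.
apply: regular_ext (regular_cat (regular_letter t) IH) => w.
by split=> [[w1 [w2 [-> -> ->]]] | ->] //; exists [:: t], c.
Qed.

End RegularClosure.

(** * Padded languages *)

Section Padding.
Variable B : finType.
Notation T := (option B * option B)%type.
Implicit Types (u v : seq B) (P : seq B -> seq B -> Prop).

Lemma size_deltaR_parts u v :
  size (map Some u ++ nseq (maxn (size u) (size v) - size u) None) =
  size (map Some v ++ nseq (maxn (size u) (size v) - size v) None).
Proof. by rewrite !size_cat !size_nseq !size_map !subnKC ?leq_maxl ?leq_maxr. Qed.

Lemma size_deltaL_parts u v :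
  size (nseq (maxn (size u) (size v) - size u) None ++ map Some u) =
  size (nseq (maxn (size u) (size v) - size v) None ++ map Some v).
Proof. by rewrite !size_cat !size_nseq !size_map !subnK ?leq_maxl ?leq_maxr. Qed.

Lemma deltaR_cat u1 u2 v1 v2 : size u1 = size v1 ->
  deltaR (u1 ++ u2) (v1 ++ v2) = deltaR u1 v1 ++ deltaR u2 v2.
Proof.
move=> E; rewrite /deltaR !size_cat E maxnn subnn /= -addn_maxr.
by rewrite !subnDl !map_cat -!catA !cats0 zip_cat // !size_map.
Qed.

Lemma deltaL_cat u1 u2 v1 v2 : size u2 = size v2 ->
  deltaL (u1 ++ u2) (v1 ++ v2) = deltaL u1 v1 ++ deltaL u2 v2.
Proof.
move=> E; rewrite /deltaL !size_cat E maxnn subnn /= -addn_maxl.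
by rewrite !subnDr !map_cat !catA zip_cat ?cats0 // size_deltaL_parts.
Qed.

Lemma deltaR_diag u : deltaR u u = [seq (Some t, Some t) | t <- u].
Proof. by rewrite /deltaR maxnn subnn /= !cats0 zip_map. Qed.

Lemma deltaL_diag u : deltaL u u = [seq (Some t, Some t) | t <- u].
Proof. by rewrite /deltaL maxnn subnn /= zip_map. Qed.

Lemma pmap_Some_nseq_None u k : pmap id (map Some u ++ nseq k None) = u.
Proof. by elim: u => [|x u IH] /=; [elim: k | rewrite IH]. Qed.

Lemma pmap_nseq_None_Some u k : pmap id (nseq k None ++ map Some u) = u.
Proof. by elim: k => [|k IH] //=; elim: u => [|x u IH] //=; rewrite IH. Qed.

Lemma pmap_fst_zip (s t : seq (option B)) : size s = size t ->
  pmap fst (zip s t) = pmap id s.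
Proof. by elim: s t => [|x s IH] [|y t] //= [/IH ->]; case: x. Qed.

Lemma pmap_snd_zip (s t : seq (option B)) : size s = size t ->
  pmap snd (zip s t) = pmap id t.
Proof. by elim: s t => [|x s IH] [|y t] //= [/IH ->]; case: y. Qed.

Lemma deltaR_fst u v : pmap fst (deltaR u v) = u.
Proof. by rewrite pmap_fst_zip ?size_deltaR_parts // pmap_Some_nseq_None. Qed.
Lemma deltaR_snd u v : pmap snd (deltaR u v) = v.
Proof. by rewrite pmap_snd_zip ?size_deltaR_parts // pmap_Some_nseq_None. Qed.
Lemma deltaL_fst u v : pmap fst (deltaL u v) = u.
Proof. by rewrite pmap_fst_zip ?size_deltaL_parts // pmap_nseq_None_Some. Qed.
Lemma deltaL_snd u v : pmap snd (deltaL u v) = v.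
Proof. by rewrite pmap_snd_zip ?size_deltaL_parts // pmap_nseq_None_Some. Qed.

Lemma rev_deltaL u v : rev (deltaL u v) = deltaR (rev u) (rev v).
Proof.
rewrite /deltaL /deltaR rev_zip ?size_deltaL_parts //.
by rewrite !size_rev !rev_cat !map_rev !rev_nseq.
Qed.

Lemma padlang_ext pad P Q : (forall u v, P u v <-> Q u v) ->
  regular (padlang pad P) -> regular (padlang pad Q).
Proof.
move=> PQ RP; apply: regular_ext RP => w.
by split=> -[u [v [Puv ->]]]; exists u, v; split=> //; apply/PQ.
Qed.

(* [S] need not be functional: intersecting it with A x A recovers the graph of
   E on A because E is functional there and S meets it at every u in A. *)
Lemma regular_padlang_functional pad (A : seq B -> Prop) (E S : seq B -> seq B -> Prop) :
  (forall u v, pmap fst (pad u v) = u) -> (forall u v, pmap snd (pad u v) = v) ->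
  regular A -> regular (padlang pad S) ->
  (forall u v, S u v -> E u v) ->
  (forall u, A u -> exists2 v, A v & S u v) ->
  (forall u v v', A u -> A v -> A v' -> E u v -> E u v' -> v = v') ->
  regular (padlang pad (fun u v => A u /\ A v /\ E u v)).
Proof.
move=> pad1 pad2 RA RS SE Stot Efun.
have RA1 := regular_pmap (fst : T -> option B) RA.
have RA2 := regular_pmap (snd : T -> option B) RA.
apply: regular_ext (regular_and RS (regular_and RA1 RA2)) => w; split.
  move=> [[u [v [Suv ->]]]]; rewrite pad1 pad2 => -[Au Av].
  by exists u, v; do !split=> //; apply: SE.
move=> [u [v [[Au [Av Euv]] ->]]]; rewrite pad1 pad2; do !split=> //.
have [v' Av' Suv'] := Stot u Au.
by exists u, v; rewrite (Efun u v v') //; apply: SE.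
Qed.

Lemma regular_diag (D : pred B) (pad : seq B -> seq B -> seq T) :
  (forall u, pad u u = [seq (Some t, Some t) | t <- u]) ->
  regular (padlang pad (fun u v => all D u /\ v = u)).
Proof.
move=> pad_diag; pose dg (p : T) := if p is (Some x, Some y) then (x == y) && D x else false.
apply: regular_ext (regular_all dg) => w; split.
  elim: w => [|[[x|] [y|]] w IH] //=; first by exists [::], [::].
  case/andP=> /andP[/eqP <- Dx] /IH [u [_ [[Du ->] Ew]]].
  by exists (x :: u), (x :: u); rewrite pad_diag /= Dx Du -pad_diag Ew.
move=> [u [_ [[Du ->] ->]]]; rewrite pad_diag.
by elim: u Du => //= x u IH /andP[Dx /IH ->]; rewrite eqxx Dx.
Qed.

Definition shift_first (w : seq T) : seq T := zip (belast None (unzip1 w)) (unzip2 w).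

Lemma size_shift_first w : size (shift_first w) = size w.
Proof. by rewrite size_zip size_belast !size_map minnn. Qed.

Lemma shift_first_inj w w' :
  last None (unzip1 w) = None -> last None (unzip1 w') = None ->
  shift_first w = shift_first w' -> w = w'.
Proof.
move=> lw lw' E; have Es : size w = size w'.
  by rewrite -size_shift_first E size_shift_first.
have := congr1 unzip1 E; have := congr1 unzip2 E.
rewrite /shift_first !unzip1_zip ?unzip2_zip ?size_belast ?size_map ?Es // => E2 E1.
have E1' : unzip1 w = unzip1 w'.
  move: (lastI None (unzip1 w)) (lastI None (unzip1 w')); rewrite E1 lw lw' => H1 H2.
  by case: (etrans H1 (esym H2)).
by rewrite -[w]zip_unzip -[w']zip_unzip E1' E2.
Qed.

Lemma regular_shift_first (Q : seq T -> Prop) : regular Q ->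
  regular (fun w => Q (shift_first w) /\ last None (unzip1 w) = None).
Proof.
move=> [S [q0 [d [F H]]]].
pose step (st : S * option B) (t : T) := (d st.1 (st.2, t.2), t.1).
exists (S * option B)%type, (q0, None), step,
  (fun st : S * option B => F st.1 && (st.2 == None)) => w.
have -> : foldl step (q0, None) w = (foldl d q0 (shift_first w), last None (unzip1 w)).
  elim/last_ind: w => [|w t IH] //.
  rewrite -cats1 foldl_cat IH /shift_first /unzip1 /unzip2 !map_cat /= !cats1 belast_rcons lastI.
  by rewrite zip_rcons ?size_belast ?size_map // -cats1 foldl_cat /= last_rcons.
by rewrite /= H; split=> [[-> ->] | /andP[-> /eqP]].
Qed.

Section OneLonger.
Variables u v : seq B.
Hypothesis uv : size v = (size u).+1.

Lemma unzip1_deltaR : unzip1 (deltaR u v) = rcons (map Some u) None.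
Proof.
rewrite /deltaR uv (maxn_idPr (leqnSn _)) subnn subSnn /= cats0 unzip1_zip ?cats1 //.
by rewrite size_rcons !size_map uv.
Qed.

Lemma shift_first_deltaR : shift_first (deltaR u v) = deltaL u v.
Proof.
rewrite /shift_first unzip1_deltaR belast_rcons /deltaR /deltaL uv.
rewrite (maxn_idPr (leqnSn _)) subnn subSnn /= cats0 unzip2_zip //.
by rewrite size_cat !size_map uv addn1.
Qed.

Lemma last_unzip1_deltaR : last None (unzip1 (deltaR u v)) = None.
Proof. by rewrite unzip1_deltaR last_rcons. Qed.

End OneLonger.

(* Under a length difference of exactly one, the right-padded word is the
   left-padded one with its first track shifted by one position. *)
Lemma regular_padR_of_padL P : (forall u v, P u v -> size v = (size u).+1) ->
  regular (padlang (@deltaL B) P) -> regular (padlang (@deltaR B) P).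
Proof.
move=> Psize /regular_shift_first RP; apply: regular_ext RP => w; split.
  move=> [[u [v [Puv Ew]]] lw]; exists u, v; split=> //.
  have uv := Psize _ _ Puv.
  apply: shift_first_inj => //; first exact: last_unzip1_deltaR.
  by rewrite shift_first_deltaR.
move=> [u [v [Puv ->]]]; have uv := Psize _ _ Puv.
by rewrite shift_first_deltaR // last_unzip1_deltaR //; split=> //; exists u, v.
Qed.

Lemma padlang_deltaL_rev P w : padlang (@deltaL B) P w <->
  padlang (@deltaR B) (fun u v => P (rev u) (rev v)) (rev w).
Proof.
split=> [[u [v [Puv ->]]] | [u [v [Puv Ew]]]].
  by exists (rev u), (rev v); rewrite !revK rev_deltaL.
exists (rev u), (rev v); split=> //.
by apply: (can_inj (@revK _)); rewrite rev_deltaL !revK.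
Qed.

Lemma regular_padL_of_padR P : (forall u v, P u v -> size v = (size u).+1) ->
  regular (padlang (@deltaR B) P) -> regular (padlang (@deltaL B) P).
Proof.
move=> Psize RP; pose Pr u v := P (rev u) (rev v).
have RPr : regular (padlang (@deltaL B) Pr).
  apply: regular_ext (regular_rev RP) => w; rewrite padlang_deltaL_rev.
  by split=> -[u [v [H ->]]]; exists u, v; rewrite /Pr !revK in H *.
have RPr' : regular (padlang (@deltaR B) Pr).
  by apply: regular_padR_of_padL RPr => u v /Psize; rewrite !size_rev.
by apply: regular_ext (regular_rev RPr') => w; rewrite padlang_deltaL_rev.
Qed.

End Padding.

Notation wrel T := (seq T -> seq T -> Prop).

Section PaddedRelations.
Variable B : finType.
Implicit Types (u v : seq B) (P Q : wrel B).

Definition rcat P Q : wrel B := fun u v => exists u1 u2 v1 v2,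
  [/\ u = u1 ++ u2, v = v1 ++ v2, P u1 v1 & Q u2 v2].
Definition ror P Q : wrel B := fun u v => P u v \/ Q u v.
Definition rsingle x y : wrel B := fun u v => u = x /\ v = y.
Definition rdiag (D : pred B) : wrel B := fun u v => all D u /\ v = u.

Definition size_preserving P := forall u v, P u v -> size u = size v.

Lemma size_preserving_cat P Q :
  size_preserving P -> size_preserving Q -> size_preserving (rcat P Q).
Proof. by move=> HP HQ _ _ [u1 [u2 [v1 [v2 [-> -> /HP E1 /HQ E2]]]]]; rewrite !size_cat E1 E2. Qed.

Lemma size_preserving_single x y : size x = size y -> size_preserving (rsingle x y).
Proof. by move=> E u v [-> ->]. Qed.

Lemma size_preserving_diag D : size_preserving (rdiag D).
Proof. by move=> u v [_ ->]. Qed.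

Lemma regular_padlang_ror pad P Q : regular (padlang pad P) -> regular (padlang pad Q) ->
  regular (padlang pad (ror P Q)).
Proof.
move=> RP RQ; apply: regular_ext (regular_or RP RQ) => w; split.
  by case=> -[u [v [H ->]]]; exists u, v; split=> //; [left | right].
by move=> [u [v [[H | H] ->]]]; [left | right]; exists u, v.
Qed.

Lemma regular_padlang_rsingle pad x y : regular (padlang pad (rsingle x y)).
Proof.
apply: regular_ext (regular_word (pad x y)) => w.
by split=> [-> | [u [v [[-> ->] ->]]]] //; exists x, y.
Qed.

Lemma regular_padR_rdiag D : regular (padlang (@deltaR B) (rdiag D)).
Proof. exact/regular_diag/deltaR_diag. Qed.

Lemma regular_padL_rdiag D : regular (padlang (@deltaL B) (rdiag D)).
Proof. exact/regular_diag/deltaL_diag. Qed.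

Lemma regular_padlang_rcat (pad : seq B -> seq B -> seq (option B * option B)) P Q :
  (forall u1 u2 v1 v2, P u1 v1 -> Q u2 v2 -> pad (u1 ++ u2) (v1 ++ v2) = pad u1 v1 ++ pad u2 v2) ->
  regular (padlang pad P) -> regular (padlang pad Q) -> regular (padlang pad (rcat P Q)).
Proof.
move=> pad_cat RP RQ; apply: regular_ext (regular_cat RP RQ) => w; split.
  move=> [_ [_ [-> [u1 [v1 [P1 ->]]] [u2 [v2 [Q2 ->]]]]]].
  by exists (u1 ++ u2), (v1 ++ v2); rewrite pad_cat //; split=> //; exists u1, u2, v1, v2.
move=> [_ [_ [[u1 [u2 [v1 [v2 [-> -> P1 Q2]]]]] ->]]].
by exists (pad u1 v1), (pad u2 v2); rewrite pad_cat //; split=> //; [exists u1, v1 | exists u2, v2].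
Qed.

Lemma regular_padR_rcat P Q : size_preserving P ->
  regular (padlang (@deltaR B) P) -> regular (padlang (@deltaR B) Q) ->
  regular (padlang (@deltaR B) (rcat P Q)).
Proof. by move=> HP; apply: regular_padlang_rcat => u1 u2 v1 v2 /HP /deltaR_cat. Qed.

Lemma regular_padL_rcat P Q : size_preserving Q ->
  regular (padlang (@deltaL B) P) -> regular (padlang (@deltaL B) Q) ->
  regular (padlang (@deltaL B) (rcat P Q)).
Proof. by move=> HQ; apply: regular_padlang_rcat => u1 u2 v1 v2 _ /HQ /deltaL_cat. Qed.

End PaddedRelations.

(** * Presentations with length-preserving relations *)

Section Presentations.
Variables (A : Type) (R : seq A -> seq A -> Prop).
Notation "x =M y" := (eqM R x y) (at level 70).

Lemma eqM_refl x : x =M x. Proof. exact: rst_refl. Qed.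
Lemma eqM_sym x y : x =M y -> y =M x. Proof. exact: rst_sym. Qed.
Lemma eqM_trans x y z : x =M y -> y =M z -> x =M z. Proof. exact: rst_trans. Qed.

Lemma eqM_rel l r : R l r -> l =M r.
Proof. by move=> H; apply: rst_step; have := rstep_intro [::] [::] H; rewrite /= !cats0. Qed.

Lemma eqM_ctx p q x y : x =M y -> p ++ x ++ q =M p ++ y ++ q.
Proof.
elim=> [_ _ [u v l r H] | x' | x' y' _ | x' y' z' _ IH1 _ IH2].
- have E s : p ++ (u ++ s ++ v) ++ q = (p ++ u) ++ s ++ (v ++ q) by rewrite !catA.
  by apply: rst_step; rewrite !E; constructor.
- exact: eqM_refl.
- exact: eqM_sym.
- exact: eqM_trans IH1 IH2.
Qed.

Lemma eqM_cat x x' y y' : x =M x' -> y =M y' -> x ++ y =M x' ++ y'.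
Proof.
move=> H1 H2; apply: (@eqM_trans _ (x' ++ y)).
  by have := eqM_ctx [::] y H1; rewrite /=.
by have := eqM_ctx x' [::] H2; rewrite !cats0.
Qed.

Lemma eqM_cons t x y : x =M y -> t :: x =M t :: y.
Proof. exact: (eqM_cat (eqM_refl [:: t])). Qed.

Hypothesis R_size : forall l r, R l r -> size l = size r.

Lemma eqM_size x y : x =M y -> size x = size y.
Proof.
elim=> [_ _ [u v l r /R_size E] | | | x' y' z' _ -> _ ->] //.
by rewrite !size_cat E.
Qed.

End Presentations.
Arguments eqM_refl {A R} x.

Notation letters := (fun t => [:: t]).

Lemma evalw_letters (A : Type) (u : seq A) : evalw letters u = u.
Proof. by elim: u => //= t u; rewrite /evalw /= => ->. Qed.

Lemma biautomatic_of_length_preserving (A : finType) (R : seq A -> seq A -> Prop)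
    (L : seq A -> Prop) :
  (forall l r, R l r -> size l = size r) ->
  regular L -> maps_onto R letters L ->
  (forall a, regular (padlang (@deltaR A) (Lright R letters L a))) ->
  (forall a, regular (padlang (@deltaL A) (Lleft R letters L a))) ->
  biautomatic R /\ automatic R.
Proof.
move=> R_size RL onto RLR RLL.
have Lsize t u v : Lleft R letters L (Some t) u v -> size v = (size u).+1.
  by move=> [_ [_]]; rewrite !evalw_letters => /(eqM_size R_size) <-.
have Rsize t u v : Lright R letters L (Some t) u v -> size v = (size u).+1.
  by move=> [_ [_]]; rewrite !evalw_letters => /(eqM_size R_size) <-; rewrite size_cat addn1.
have LR_none u v : Lright R letters L None u v <-> Lleft R letters L None u v.
  by rewrite /Lright /Lleft /= cats0.
split; last by exists A, letters, L.
exists A, letters, L; split=> //; split=> // -[t|]; split=> //.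
- exact: regular_padR_of_padL (Lsize t) (RLL _).
- exact: regular_padL_of_padR (Rsize t) (RLR _).
- by apply: padlang_ext (RLR None) => u v; rewrite LR_none.
- by apply: padlang_ext (RLL None) => u v; rewrite LR_none.
Qed.

(** * Normal forms in M *)

Definition gen_code (g : gen) : nat :=
  match g with ga => 0 | gb1 => 1 | gb2 => 2 | gb3 => 3 | gc1 => 4 | gc2 => 5
  | gc3 => 6 | gd1 => 7 | gd2 => 8 | gd3 => 9 end.
Definition gen_decode (n : nat) : option gen :=
  match n with 0 => Some ga | 1 => Some gb1 | 2 => Some gb2 | 3 => Some gb3
  | 4 => Some gc1 | 5 => Some gc2 | 6 => Some gc3 | 7 => Some gd1 | 8 => Some gd2
  | 9 => Some gd3 | _ => None end.
Lemma gen_codeK : pcancel gen_code gen_decode. Proof. by case. Qed.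
HB.instance Definition _ := Countable.copy gen (pcan_type gen_codeK).
Lemma gen_enumP : Finite.axiom [:: ga; gb1; gb2; gb3; gc1; gc2; gc3; gd1; gd2; gd3].
Proof. by case. Qed.
HB.instance Definition _ := isFinite.Build gen gen_enumP.

Notation "x =M y" := (eqM M_rel x y) (at level 70).

Definition isa t := if t is ga then true else false.
Definition isb t := match t with gb1 | gb2 | gb3 => true | _ => false end.
Definition isc t := match t with gc1 | gc2 | gc3 => true | _ => false end.
Definition isd t := match t with gd1 | gd2 | gd3 => true | _ => false end.
Definition idx t := match t with ga => 0 | gb1 | gc1 | gd1 => 1 | gb2 | gc2 | gd2 => 2
  | gb3 | gc3 | gd3 => 3 end.
Definition b_of n := match n with 1 => gb1 | 2 => gb2 | _ => gb3 end.
Definition c_of n := match n with 1 => gc1 | 2 => gc2 | _ => gc3 end.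
Definition d_of n := match n with 1 => gd1 | 2 => gd2 | _ => gd3 end.

Lemma b_of_idx t : isb t -> b_of (idx t) = t. Proof. by case: t. Qed.
Lemma c_of_idx t : isc t -> c_of (idx t) = t. Proof. by case: t. Qed.
Lemma d_of_idx t : isd t -> d_of (idx t) = t. Proof. by case: t. Qed.

Lemma M_rel_size l r : M_rel l r -> size l = size r. Proof. by case. Qed.

Lemma nseq_a_cons k s : nseq k ga ++ ga :: s = ga :: nseq k ga ++ s.
Proof. by elim: k => //= k ->. Qed.

Lemma eqM_b_a t : isb t -> [:: t; ga] =M [:: ga; t].
Proof. by case: t => // _; apply: eqM_rel; constructor. Qed.

Lemma eqM_b_apow t k : isb t -> t :: nseq k ga =M nseq k ga ++ [:: t].
Proof.
move=> tb; elim: k => [|k IH] /=; first exact: eqM_refl.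
apply: (eqM_trans (y := [:: ga; t] ++ nseq k ga)); last exact: eqM_cons.
exact: (eqM_cat (eqM_b_a tb) (eqM_refl _)).
Qed.

Lemma eqM_b_apow_cat t k s : isb t -> t :: nseq k ga ++ s =M nseq k ga ++ t :: s.
Proof.
by move=> tb; rewrite -[t :: s]cat1s catA; apply: (eqM_cat (eqM_b_apow k tb) (eqM_refl s)).
Qed.

Lemma eqM_bs_a bs : all isb bs -> bs ++ [:: ga] =M ga :: bs.
Proof.
elim: bs => [|t bs IH] /=; first by move=> _; exact: eqM_refl.
case/andP=> tb /IH H; apply: (eqM_trans (y := t :: ga :: bs)); first exact: eqM_cons.
exact: (eqM_cat (eqM_b_a tb) (eqM_refl bs)).
Qed.

Lemma eqM_cb b c : isb b -> isc c -> idx b = idx c -> [:: c; b] =M [:: gc1; gb1].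
Proof. by case: b; case: c => // _ _ _; try exact: eqM_refl; apply: eqM_rel; constructor. Qed.

Lemma eqM_bd b d : isb b -> isd d -> idx b = idx d -> [:: b; d] =M [:: gb1; gd1].
Proof. by case: b; case: d => // _ _ _; try exact: eqM_refl; apply: eqM_rel; constructor. Qed.

Lemma eqM_c_apow_b b c k q : isb b -> isc c -> idx b = idx c ->
  c :: nseq k ga ++ b :: q =M gc1 :: nseq k ga ++ gb1 :: q.
Proof.
move=> bb cc E; rewrite -[b :: q]cat1s -[gb1 :: q]cat1s !catA -!cat_cons.
apply: eqM_cat (eqM_refl q).
apply: (eqM_trans (y := c :: b :: nseq k ga)).
  by apply: eqM_cons; apply/eqM_sym/eqM_b_apow.
apply: (eqM_trans (y := gc1 :: gb1 :: nseq k ga)); last by apply/eqM_cons/eqM_b_apow.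
exact: (eqM_cat (eqM_cb bb cc E) (eqM_refl _)).
Qed.

(* Both sides equal [c_i a^k b_i d_i q] with [i = idx z]. *)
Lemma eqM_c1_apow_b1_d k z q : isd z ->
  gc1 :: nseq k ga ++ gb1 :: z :: q =M c_of (idx z) :: nseq k ga ++ gb1 :: gd1 :: q.
Proof.
move=> dz; apply: (eqM_trans (y := c_of (idx z) :: nseq k ga ++ b_of (idx z) :: z :: q)).
  by apply: eqM_sym; apply: eqM_c_apow_b; case: z dz.
rewrite -!cat_cons; apply: (eqM_cat (eqM_refl _)).
by apply: (eqM_cat (x := [:: _; z]) (x' := [:: gb1; gd1]) _ (eqM_refl q)); apply: eqM_bd;
  case: z dz.
Qed.

Fixpoint apow_len (s : seq gen) := if s is ga :: s' then (apow_len s').+1 else 0.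
Fixpoint drop_apow (s : seq gen) := if s is ga :: s' then drop_apow s' else s.
Definition no_lead_a (p : seq gen) := if p is ga :: _ then false else true.

Lemma apow_split s : s = nseq (apow_len s) ga ++ drop_apow s.
Proof. by elim: s => [|[] s IH] //=; rewrite -IH. Qed.
Lemma no_lead_a_drop s : no_lead_a (drop_apow s). Proof. by elim: s => [|[] s IH]. Qed.
Lemma apow_len_cat k p : no_lead_a p -> apow_len (nseq k ga ++ p) = k.
Proof. by elim: k => [|k IH] /=; [case: p => [|[]] | move=> /IH ->]. Qed.
Lemma drop_apow_cat k p : no_lead_a p -> drop_apow (nseq k ga ++ p) = p.
Proof. by elim: k => [|k IH] /=; [case: p => [|[]] | move=> /IH ->]. Qed.

Lemma apow_decomp s : exists k p, no_lead_a p /\ s = nseq k ga ++ p.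
Proof. by exists (apow_len s), (drop_apow s); rewrite -apow_split no_lead_a_drop. Qed.

(* [lmul t s] is the normal form of [t s] for a normal form [s]: a letter b_i
   moves past the leading a-block and then reduces b_i d_i to b_1 d_1; a letter
   c_i stays in front of the a-block and reduces c_i a^k b_i to c_1 a^k b_1, or
   to c_j a^k b_1 d_1 when d_j (j = 2, 3) follows. *)
Definition lmul_b t p :=
  if p is d :: q then
    if isd d && (idx d == idx t) && (idx t != 1) then gb1 :: gd1 :: q else t :: p
  else [:: t].

Definition lmul_c t k p :=
  if p is y :: q then
    if isb y && (idx y == idx t) then
      if q is z :: q' then
        if isd z && (idx z != 1) then c_of (idx z) :: nseq k ga ++ gb1 :: gd1 :: q'
        else gc1 :: nseq k ga ++ gb1 :: q
      else gc1 :: nseq k ga ++ [:: gb1]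
    else t :: nseq k ga ++ p
  else t :: nseq k ga.

Definition lmul_apow t k p :=
  match t with
  | gb1 | gb2 | gb3 => nseq k ga ++ lmul_b t p
  | gc1 | gc2 | gc3 => lmul_c t k p
  | _ => t :: nseq k ga ++ p
  end.

Definition lmul t s := lmul_apow t (apow_len s) (drop_apow s).
Arguments lmul : simpl never.

Definition nf (w : seq gen) := foldr lmul [::] w.

Fixpoint normal (w : seq gen) : bool :=
  if w is t :: s then (lmul t s == t :: s) && normal s else true.

Lemma normal_cons t s : normal (t :: s) = (lmul t s == t :: s) && normal s.
Proof. by []. Qed.

Lemma lmul_apow_cat t k p : no_lead_a p -> lmul t (nseq k ga ++ p) = lmul_apow t k p.
Proof. by move=> np; rewrite /lmul apow_len_cat // drop_apow_cat. Qed.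

Lemma lmul_no_lead_a t p : no_lead_a p -> lmul t p = lmul_apow t 0 p.
Proof. exact: (lmul_apow_cat t 0). Qed.

Lemma lmul_a s : lmul ga s = ga :: s.
Proof. by rewrite /lmul /= -apow_split. Qed.

Lemma lmul_d d s : isd d -> lmul d s = d :: s.
Proof. by case: d => // _; rewrite /lmul /= -apow_split. Qed.

Lemma lmul_b_sound b p : isb b -> b :: p =M lmul_b b p.
Proof.
move=> bb; case: p => [|d q] /=; first exact: eqM_refl.
case: ifP => H; last exact: eqM_refl.
apply: (eqM_cat (x := [:: b; d]) (x' := [:: gb1; gd1]) _ (eqM_refl q)).
by apply: eqM_bd => //; case: d H => //; case: b bb.
Qed.

Lemma lmul_c_sound c k p : isc c -> c :: nseq k ga ++ p =M lmul_c c k p.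
Proof.
move=> cc; case: p => [|y q] /=; first by rewrite cats0; exact: eqM_refl.
case: ifP => [/andP[yb /eqP E] | _]; last exact: eqM_refl.
apply: eqM_trans (eqM_c_apow_b k q yb cc E) _.
case: q => [|z q']; first exact: eqM_refl.
by case: ifP => [/andP[zd _] | _]; [apply: eqM_c1_apow_b1_d | apply: eqM_refl].
Qed.

Lemma lmul_sound t s : t :: s =M lmul t s.
Proof.
rewrite {1}[s]apow_split /lmul; move: (apow_len s) (drop_apow s) => k p.
case: t; try exact: eqM_refl; try exact: lmul_c_sound.
all: apply: (eqM_trans (y := nseq k ga ++ _ :: p)); first exact: eqM_b_apow_cat.
all: exact: eqM_cat (eqM_refl _) (lmul_b_sound p _).
Qed.

Lemma lmul_rel l r s : M_rel l r -> foldr lmul s l = foldr lmul s r.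
Proof.
case=> /=; rewrite /lmul /= ?apow_len_cat ?drop_apow_cat //.
all: try apply: no_lead_a_drop.
all: try (by case: (drop_apow s) => [|[] ?]).
all: move: (apow_len s) (drop_apow s) => k p.
all: case: p => [|y q]; first by [].
all: case: y; case: q => [|z q]; try case: z; by [].
Qed.

Lemma nf_eqM x y : x =M y -> nf x = nf y.
Proof.
elim=> // [_ _ [u v l r /lmul_rel H] | *]; last congruence.
by rewrite /nf !foldr_cat; congr (foldr lmul _ u); apply: H.
Qed.

Lemma nf_sound w : w =M nf w.
Proof.
elim: w => [|t w IH] /=; first exact: eqM_refl.
exact: eqM_trans (eqM_cons t IH) (lmul_sound _ _).
Qed.

Lemma normal_nf_id w : normal w -> nf w = w.
Proof. by elim: w => //= t w IH /andP[/eqP H /IH ->]. Qed.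

Lemma normal_unique u v : normal u -> normal v -> u =M v -> u = v.
Proof. by move=> /normal_nf_id {2}<- /normal_nf_id {2}<- /nf_eqM. Qed.

Lemma normal_apow k s : normal (nseq k ga ++ s) = normal s.
Proof. by elim: k => //= k ->; rewrite lmul_a eqxx. Qed.

Lemma normal_suffix p s : normal (p ++ s) -> normal s.
Proof. by elim: p => //= t p IH /andP[_ /IH]. Qed.

Lemma normal_b_no_lead_a b p : isb b -> normal (b :: p) -> no_lead_a p.
Proof. by case: p => [|[] p] //=; case: b => //; rewrite /lmul /= eqseq_cons. Qed.

Lemma normal_lmul_b b y q : isb b -> no_lead_a (y :: q) -> normal (y :: q) ->
  normal (lmul_b b (y :: q)).
Proof.
case: b => // _; case: y => //= _ H.
all: rewrite ?normal_cons lmul_no_lead_a //= eqxx ?H //=.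
all: by move: H; rewrite !normal_cons lmul_d // eqxx /= => /andP[].
Qed.

Lemma normal_b1 y q : isb y -> normal (y :: q) -> normal (gb1 :: q).
Proof.
move=> yb H; have nq := normal_b_no_lead_a yb H; move: H => /= /andP[_ ->].
by rewrite andbT lmul_no_lead_a //=; case: q nq => [|[] q] //= _; rewrite eqxx.
Qed.

Lemma normal_b1_d1 y z q : normal [:: y, z & q] -> normal [:: gb1, gd1 & q].
Proof.
rewrite !normal_cons => /and3P[_ _ ->].
by rewrite [lmul gd1 _]lmul_d // [lmul gb1 _]lmul_no_lead_a //= !eqxx.
Qed.

Lemma normal_lmul_b_apow b k p : isb b -> no_lead_a p -> normal p ->
  normal (nseq k ga ++ lmul_b b p).
Proof.
move=> bb np Np; rewrite normal_apow; case: p np Np => [|y q] np Np; last exact: normal_lmul_b.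
by rewrite /= lmul_no_lead_a //; case: b bb.
Qed.

Lemma normal_lmul_c c k p : isc c -> no_lead_a p -> normal p -> normal (lmul_c c k p).
Proof.
move=> cc np Np; case: p np Np => [|y q] np Np.
  rewrite [lmul_c _ _ _]/= -[nseq k ga]cats0 normal_cons lmul_apow_cat // normal_apow.
  by case: c cc => // _; rewrite /= cats0 eqxx.
rewrite /lmul_c; case: ifP => [/andP[yb _] | ncy]; last first.
  rewrite normal_cons lmul_apow_cat // normal_apow Np andbT.
  by case: c cc ncy => //= _ ->.
have nq := normal_b_no_lead_a yb Np; case: q np nq Np => [|z q] np nq Np.
  by rewrite normal_cons lmul_apow_cat // normal_apow /= eqxx.
case: ifP => [/andP[zd z1] | nzd]; rewrite normal_cons lmul_apow_cat // normal_apow.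
  by rewrite (normal_b1_d1 Np) andbT; move: zd z1; clear; case: z => //= _ _; rewrite eqxx.
by rewrite (normal_b1 yb Np) andbT /= nzd.
Qed.

Lemma normal_lmul t s : normal s -> normal (lmul t s).
Proof.
have [k [p [np ->]]] := apow_decomp s; rewrite normal_apow lmul_apow_cat // => Np.
case: t; rewrite /lmul_apow.
- by rewrite normal_cons lmul_a eqxx normal_apow.
1-3: exact: normal_lmul_b_apow.
1-3: exact: normal_lmul_c.
all: by rewrite normal_cons lmul_d // eqxx normal_apow.
Qed.

Lemma normal_nf w : normal (nf w).
Proof. by elim: w => //= t w IH; apply: normal_lmul. Qed.

(* Reading a word from right to left, [nrun] records whether the suffix read so
   far is normal, its first letter if that is a, d_2 or d_3, its first non-a
   letter if that is a b, and whether this b is followed by d_2 or d_3.  This is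
   exactly what [lmul t s == t :: s] depends on. *)
Definition nstate := (bool * option gen * option gen * bool)%type.
Definition nst_ok (q : nstate) := q.1.1.1.
Definition nst_head (q : nstate) := q.1.1.2.
Definition nst_first_b (q : nstate) := q.1.2.
Definition nst_b_d23 (q : nstate) := q.2.

Definition head_info t : option gen :=
  match t with ga => Some ga | gd2 => Some gd2 | gd3 => Some gd3 | _ => None end.
Definition is_d23 (h : option gen) := if h is Some (gd2 | gd3) then true else false.

Definition lmul_fixed t (h f : option gen) (g : bool) :=
  match t with
  | gb1 | gb2 | gb3 => (h != Some ga) &&
      ~~ ((idx t != 1) && (if h is Some d then isd d && (idx d == idx t) else false))
  | gc1 | gc2 | gc3 =>
      if f is Some y then ~~ (isb y && (idx y == idx t)) || ((idx t == 1) && ~~ g) else true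
  | _ => true
  end.

Definition nstep (q : nstate) t : nstate :=
  (nst_ok q && lmul_fixed t (nst_head q) (nst_first_b q) (nst_b_d23 q), head_info t,
   if isa t then nst_first_b q else if isb t then Some t else None,
   if isa t then nst_b_d23 q else isb t && is_d23 (nst_head q)).

Definition ninit : nstate := (true, None, None, false).
Definition nrun (w : seq gen) := foldr (fun t q => nstep q t) ninit w.

Lemma nrun_head s : nst_head (nrun s) = if s is t :: _ then head_info t else None.
Proof. by case: s. Qed.

Lemma nrun_first_b s :
  nst_first_b (nrun s) = if drop_apow s is y :: _ then (if isb y then Some y else None) else None.
Proof. by elim: s => [|[] s IH]. Qed.

Lemma nrun_b_d23 s : nst_b_d23 (nrun s) =
  if drop_apow s is y :: q then isb y && is_d23 (if q is z :: _ then head_info z else None)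
  else false.
Proof. by elim: s => [|[] s IH] //=; rewrite /nstep /= nrun_head. Qed.

Lemma lmul_fixedE t s : (lmul t s == t :: s) =
  lmul_fixed t (nst_head (nrun s)) (nst_first_b (nrun s)) (nst_b_d23 (nrun s)).
Proof.
rewrite nrun_head nrun_first_b nrun_b_d23.
have [k [p [np ->]]] := apow_decomp s; rewrite lmul_apow_cat // drop_apow_cat //.
case: k => [|k] /=.
  case: p np => [|y q] np; first by case: t.
  case: t; case: y np => //= _; case: q => [|z q]; try case: z; rewrite /= ?eqxx //.
case: t => //=; case: p np => [|y q] np; rewrite /= ?cats0 ?eqxx //.
all: case: y np => //= _; rewrite ?eqxx //.
all: case: q => [|z q]; try case: z; rewrite /= ?eqseq_cons ?eqseq_cat ?eqxx //.
Qed.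

Lemma nrun_ok w : nst_ok (nrun w) = normal w.
Proof.
by elim: w => //= t w IH; rewrite /nstep /nst_ok /= -/(nst_ok _) IH lmul_fixedE andbC.
Qed.

Lemma regular_normal : regular (fun w => normal w).
Proof.
have R : regular (fun w => normal (rev w)).
  exists nstate, ninit, nstep, nst_ok => w.
  by rewrite -nrun_ok /nrun -foldl_rev revK.
by apply: regular_ext (regular_rev R) => w; rewrite revK.
Qed.

Lemma normal_prefix_nrun p s s' : nrun s = nrun s' -> normal (p ++ s) = normal (p ++ s').
Proof. by move=> E; rewrite -!nrun_ok /nrun !foldr_cat -!/(nrun _) E. Qed.

Lemma nst_ok_suffix p s : normal (p ++ s) -> nst_ok (nrun s).
Proof. by rewrite nrun_ok; apply: normal_suffix. Qed.

Definition nrun_apow k (q : nstate) : nstate :=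
  if k is 0 then q else (nst_ok q, Some ga, nst_first_b q, nst_b_d23 q).

Lemma nrun_apow_cat k s : nrun (nseq k ga ++ s) = nrun_apow k (nrun s).
Proof.
elim: k => [|k IH] //=; rewrite -/(nrun _) IH.
by case: k IH => [|k] //= _; rewrite /nstep /= andbT.
Qed.

Lemma nrun_apow_nil k : nrun (nseq k ga) = nrun_apow k ninit.
Proof. by rewrite -[nseq k ga]cats0 nrun_apow_cat. Qed.

Lemma nrun_skip_a t s : ~~ isb t -> nrun (t :: ga :: s) = nrun (t :: s).
Proof.
by case: t => // _; rewrite /= /nstep /=; case: (nrun s) => [[[ok h] f] g]; rewrite ?andbT.
Qed.

Lemma nrun_c c : isc c -> nrun [:: c] = nrun [::].
Proof. by case: c. Qed.

Lemma nrun_nonb_d t d : ~~ isb t -> isd d -> nrun [:: t; d] = nrun [:: t].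
Proof. by case: d => //; case: t. Qed.

Lemma nrun_append_b t k b : isb b -> t != ga -> ~~ (isc t && (idx t == idx b) && (idx b != 1)) ->
  nrun (t :: nseq k ga ++ [:: b]) = nrun (t :: nseq k ga).
Proof.
by rewrite /= nrun_apow_cat nrun_apow_nil; case: b => //; case: t => //; case: k.
Qed.

Lemma nrun_c_apow_b1 t k b : isb b -> isc t -> idx t = idx b ->
  nrun (gc1 :: nseq k ga ++ [:: gb1]) = nrun (t :: nseq k ga).
Proof.
by rewrite /= nrun_apow_cat nrun_apow_nil; case: b => //; case: t => //; case: k.
Qed.

Lemma nrun_b1_d1 t k y : t != ga -> isb y -> nst_ok (nrun (t :: nseq k ga ++ [:: y])) ->
  nrun (t :: nseq k ga ++ [:: gb1; gd1]) = nrun (t :: nseq k ga ++ [:: y]).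
Proof. by rewrite /= !nrun_apow_cat; case: y => //; case: t => //; case: k. Qed.

Lemma nrun_c_apow_b1_d1 t k y z : isc t -> idx t = idx y -> isb y -> isd z ->
  nst_ok (nrun (t :: nseq k ga ++ [:: y])) ->
  nrun (c_of (idx z) :: nseq k ga ++ [:: gb1; gd1]) = nrun (t :: nseq k ga ++ [:: y]).
Proof. by rewrite /= !nrun_apow_cat; case: z => //; case: y => //; case: t => //; case: k. Qed.

Lemma nrun_append_d t k y d : t != ga -> isb y -> isd d -> idx y != idx d ->
  ~~ (isc t && (idx t == idx y)) ->
  nrun (t :: nseq k ga ++ [:: y; d]) = nrun (t :: nseq k ga ++ [:: y]).
Proof. by rewrite /= !nrun_apow_cat; case: d => //; case: y => //; case: t => //; case: k. Qed.

(** * Right multiplication *)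

Definition rid : wrel gen := rdiag predT.

Definition rapow (x y x' y' : seq gen) : wrel gen :=
  rcat (rsingle x y) (rcat (rdiag isa) (rsingle x' y')).

Lemma rid_refl u : rid u u.
Proof. by split=> //; apply/allP. Qed.

Lemma rcat_rid_l (Q : wrel gen) p x y : Q x y -> rcat rid Q (p ++ x) (p ++ y).
Proof. by exists p, x, p, y; split=> //; apply: rid_refl. Qed.

Lemma rcat_rid_append (Q : wrel gen) u y : Q [::] y -> rcat rid Q u (u ++ y).
Proof. by move=> /(rcat_rid_l u); rewrite cats0. Qed.

Lemma rcat_rid_rP (Q : wrel gen) x y p u v : Q x y -> u = x ++ p -> v = y ++ p -> rcat Q rid u v.
Proof. by move=> H -> ->; exists x, p, y, p; split=> //; apply: rid_refl. Qed.

Lemma all_isa_nseq k : all isa (nseq k ga). Proof. by elim: k. Qed.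

Lemma all_isa_nseq_size s : all isa s -> s = nseq (size s) ga.
Proof. by elim: s => [|[] s IH] //= /IH {1}->. Qed.

Lemma rapow_intro x y x' y' k : rapow x y x' y' (x ++ nseq k ga ++ x') (y ++ nseq k ga ++ y').
Proof.
exists x, (nseq k ga ++ x'), y, (nseq k ga ++ y'); split=> //.
by exists (nseq k ga), x', (nseq k ga), y'; split=> //; split=> //; apply: all_isa_nseq.
Qed.

Lemma rapowP x y x' y' u v : rapow x y x' y' u v ->
  exists k, u = x ++ nseq k ga ++ x' /\ v = y ++ nseq k ga ++ y'.
Proof.
move=> [_ [_ [_ [_ [-> -> [-> ->] [w [_ [_ [_ [-> -> [Aw ->] [-> ->]]]]]]]]]]].
by exists (size w); rewrite -all_isa_nseq_size.
Qed.

Definition rshape_a : wrel gen := fun u v => all isb u /\ v = ga :: u.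

Definition rshape_b (b : gen) : wrel gen :=
  ror (rsingle [::] [:: b]) (rapow [:: c_of (idx b)] [:: gc1] [::] [:: gb1]).

Definition rshape_cbd (d : gen) j := rapow [:: c_of j] [:: c_of (idx d)] [:: b_of j] [:: gb1; gd1].

Definition rshape_d (d : gen) : wrel gen :=
  ror (rsingle [::] [:: d]) (ror (rsingle [:: b_of (idx d)] [:: gb1; gd1])
    (ror (rshape_cbd d 1) (ror (rshape_cbd d 2) (rshape_cbd d 3)))).

Definition rshape_local (t : gen) : wrel gen :=
  if isa t then rshape_a else if isb t then rshape_b t
  else if isc t then rsingle [::] [:: t] else rshape_d t.

Definition rshape (a : option gen) : wrel gen :=
  if a is Some t then rcat rid (rshape_local t) else rid.

Lemma rshape_local_b b : isb b -> rshape_local b = rshape_b b. Proof. by case: b. Qed.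
Lemma rshape_local_d d : isd d -> rshape_local d = rshape_d d. Proof. by case: d. Qed.

Lemma rshape_cbd_sound d j x y : isd d -> j \in [:: 1; 2; 3] -> rshape_cbd d j x y ->
  x ++ [:: d] =M y.
Proof.
move=> dd j123 /rapowP [k [-> ->]] /=; rewrite -catA /=.
apply: (eqM_trans (y := gc1 :: nseq k ga ++ [:: gb1; d])).
  by apply: eqM_c_apow_b; move: j123; rewrite !inE => /or3P[] /eqP ->.
by rewrite -(d_of_idx dd); apply: eqM_c1_apow_b1_d; case: d dd.
Qed.

Lemma rshape_local_sound t x y : rshape_local t x y -> x ++ [:: t] =M y.
Proof.
have single t' x' y' : rsingle [::] [:: t'] x' y' -> x' ++ [:: t'] =M y'.
  by move=> [-> ->]; apply: eqM_refl.
rewrite /rshape_local; case: ifP => [ta | na]; first by case: t ta => // _ [bs ->]; apply: eqM_bs_a.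
case: ifP => [tb | nb].
  case=> [/single // | /rapowP [k [-> ->]]]; rewrite /= cats0.
  by apply: eqM_c_apow_b => //; case: t tb {na}.
case: ifP => [_ /single // | nc]; have td : isd t by case: t na nb nc.
case=> [/single // | [[-> ->] | ]]; first by apply: eqM_bd => //; case: t td {na nb nc}.
by case=> [|[]] H; apply: rshape_cbd_sound H.
Qed.

Lemma rshape_sound a u v : rshape a u v -> u ++ letter a =M v.
Proof.
case: a => [t [p [x [_ [y [-> -> [_ ->] /rshape_local_sound]]]]] | [_ ->]].
  by rewrite -catA; apply: eqM_cat (eqM_refl p).
by rewrite cats0; apply: eqM_refl.
Qed.

Lemma regular_padR_rapow x y x' y' : size x = size y ->
  regular (padlang (@deltaR gen) (rapow x y x' y')).
Proof.
move=> xy; apply: regular_padR_rcat; first exact: size_preserving_single.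
  exact: regular_padlang_rsingle.
apply: regular_padR_rcat; first exact: size_preserving_diag.
  exact: regular_padR_rdiag.
exact: regular_padlang_rsingle.
Qed.

Lemma regular_padL_rapow x y x' y' : size x' = size y' ->
  regular (padlang (@deltaL gen) (rapow x y x' y')).
Proof.
move=> xy'; apply: regular_padL_rcat; last apply: regular_padL_rcat.
- by apply: size_preserving_cat; [apply: size_preserving_diag | apply: size_preserving_single].
- exact: regular_padlang_rsingle.
- exact: size_preserving_single.
- exact: regular_padL_rdiag.
- exact: regular_padlang_rsingle.
Qed.

Lemma regular_rshape_a : regular (padlang (@deltaR gen) rshape_a).
Proof.
apply: regular_padR_of_padL; first by move=> u v [_ ->].
apply: (padlang_ext (P := rcat (rsingle [::] [:: ga]) (rdiag isb))).
  move=> u v; split=> [[_ [_ [_ [_ [-> -> [-> ->] [bs ->]]]]]] // | [bs ->]].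
  by exists [::], u, [:: ga], u.
apply: regular_padL_rcat; [exact: size_preserving_diag | exact: regular_padlang_rsingle |].
exact: regular_padL_rdiag.
Qed.

Lemma regular_rshape a : regular (padlang (@deltaR gen) (rshape a)).
Proof.
case: a => [t|]; last exact: regular_padR_rdiag.
apply: regular_padR_rcat; [exact: size_preserving_diag | exact: regular_padR_rdiag |].
rewrite /rshape_local /rshape_b /rshape_d /rshape_cbd.
case: ifP => _; first exact: regular_rshape_a.
by case: ifP => _; [| case: ifP => _];
  repeat first [apply: regular_padlang_ror | apply: regular_padlang_rsingle |
                apply: regular_padR_rapow].
Qed.

Lemma split_trailing (P : pred gen) u : exists p s,
  [/\ u = p ++ s, all P s & p = [::] \/ exists p' t, p = rcons p' t /\ ~~ P t].
Proof.
elim/last_ind: u => [|u t [p [s [-> Ps Hp]]]]; first by exists [::], [::]; split=> //; left.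
case Pt: (P t).
  by exists p, (rcons s t); rewrite rcons_cat -cats1 all_cat Ps /= Pt.
exists (rcons (p ++ s) t), [::]; rewrite cats0; split=> //.
by right; exists (p ++ s), t; rewrite Pt.
Qed.

Lemma rshape_total_a u : normal u -> exists2 v, normal v & rshape (Some ga) u v.
Proof.
have [p [bs [-> Bs Hp]]] := split_trailing isb u => N.
exists (p ++ ga :: bs); last exact: rcat_rid_l.
case: Hp N => [-> | [p' [t [-> nbt]]]] N.
  by rewrite normal_cons lmul_a eqxx (normal_suffix N).
move: N; rewrite -!cats1 -!catA /=.
by rewrite (normal_prefix_nrun p' (s := t :: ga :: bs) (s' := t :: bs)) // nrun_skip_a.
Qed.

Lemma rshape_total_c u c : isc c -> normal u -> exists2 v, normal v & rshape (Some c) u v.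
Proof.
move=> cc N; exists (u ++ [:: c]); last by apply: rcat_rid_append; case: c cc.
by rewrite (normal_prefix_nrun u (s' := [::])) ?cats0 // nrun_c.
Qed.

Lemma rshape_total_b u b : isb b -> normal u -> exists2 v, normal v & rshape (Some b) u v.
Proof.
move=> bb; have [p [s [-> /all_isa_nseq_size -> Hp]]] := split_trailing isa u.
set k := size s => N; case: Hp N => [-> | [p' [t [-> nta]]]] N.
  exists (nseq k ga ++ [:: b]).
    by rewrite normal_apow; case: b bb.
  by rewrite /rshape rshape_local_b //; apply: rcat_rid_append; left.
rewrite -cats1 -catA /= in N *.
have ta : t != ga by apply: contraNneq nta => ->.
case E: (isc t && (idx t == idx b) && (idx b != 1)).
  have [/andP[tc /eqP tb] _] := andP E.
  exists (p' ++ gc1 :: nseq k ga ++ [:: gb1]).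
    by rewrite (normal_prefix_nrun _ (s' := t :: nseq k ga)) // (nrun_c_apow_b1 k bb tc tb).
  have Ct : c_of (idx b) = t by rewrite -tb c_of_idx.
  rewrite /rshape rshape_local_b //; apply: rcat_rid_l; right; rewrite Ct.
  by have := rapow_intro [:: t] [:: gc1] [::] [:: gb1] k; rewrite cats0.
exists (p' ++ t :: nseq k ga ++ [:: b]).
  by rewrite (normal_prefix_nrun _ (s' := t :: nseq k ga)) // nrun_append_b // E.
rewrite -[t :: _ ++ [:: b]]/((t :: nseq k ga) ++ [:: b]) catA.
by rewrite /rshape rshape_local_b //; apply: rcat_rid_append; left.
Qed.

Lemma rshape_cbd_idx d y x x' : isb y -> rshape_cbd d (idx y) x x' ->
  ror (rshape_cbd d 1) (ror (rshape_cbd d 2) (rshape_cbd d 3)) x x'.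
Proof. by case: y => // _ H; [left | right; left | right; right]. Qed.

Lemma rshape_total_d_after_b p y d : isd d -> isb y -> normal (p ++ [:: y]) ->
  exists2 v, normal v & rshape (Some d) (p ++ [:: y]) v.
Proof.
move=> dd yb; have [p2 [s [-> /all_isa_nseq_size -> Hp]]] := split_trailing isa p.
set k := size s; rewrite -catA => N.
have append : rshape (Some d) (p2 ++ nseq k ga ++ [:: y]) ((p2 ++ nseq k ga ++ [:: y]) ++ [:: d]).
  by rewrite /rshape rshape_local_d //; apply: rcat_rid_append; left.
rewrite -!catA /= in append.
case Ei: (idx y == idx d).
  exists (p2 ++ nseq k ga ++ [:: gb1; gd1]); last first.
    rewrite !catA /rshape rshape_local_d //; apply: rcat_rid_l; right; left.
    by rewrite -(eqP Ei) b_of_idx.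
  case: Hp N => [-> | [p3 [t [-> nta]]]] N; first by rewrite normal_apow.
  move: N; rewrite -cats1 -!catA /= => N.
  rewrite (normal_prefix_nrun p3 (s' := t :: nseq k ga ++ [:: y])) // (nrun_b1_d1 (y := y)) //.
    by apply: contraNneq nta => ->.
  exact: nst_ok_suffix N.
case: Hp N append => [-> | [p3 [t [-> nta]]]] N append.
  exists (nseq k ga ++ [:: y; d]) => //; rewrite normal_apow.
  by case: y yb Ei {N append}; case: d dd.
move: N append; rewrite -cats1 -!catA /= => N append.
have ta : t != ga by apply: contraNneq nta => ->.
have ok := nst_ok_suffix N.
case Ec: (isc t && (idx t == idx y)).
  have [tc /eqP ty] := andP Ec.
  exists (p3 ++ c_of (idx d) :: nseq k ga ++ [:: gb1; gd1]).
    rewrite (normal_prefix_nrun p3 (s' := t :: nseq k ga ++ [:: y])) //.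
    by rewrite (nrun_c_apow_b1_d1 tc ty yb dd).
  rewrite /rshape rshape_local_d //; apply: rcat_rid_l; right; right; apply: (rshape_cbd_idx yb).
  rewrite /rshape_cbd -ty c_of_idx // ty b_of_idx //.
  exact: (rapow_intro [:: t] [:: c_of (idx d)] [:: y] [:: gb1; gd1] k).
exists (p3 ++ t :: nseq k ga ++ [:: y; d]) => //.
by rewrite (normal_prefix_nrun p3 (s' := t :: nseq k ga ++ [:: y])) // nrun_append_d // ?Ei ?Ec.
Qed.

Lemma rshape_total_d u d : isd d -> normal u -> exists2 v, normal v & rshape (Some d) u v.
Proof.
move=> dd; case/lastP: u => [|p y] N.
  by exists [:: d]; [case: d dd | rewrite /rshape rshape_local_d //; apply: rcat_rid_append; left].
case yb: (isb y); first by rewrite -cats1 in N *; apply: rshape_total_d_after_b.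
exists (rcons p y ++ [:: d]).
  move: N; rewrite -!cats1 -!catA /=.
  by rewrite (normal_prefix_nrun p (s := [:: y; d]) (s' := [:: y])) // nrun_nonb_d ?yb.
by rewrite /rshape rshape_local_d //; apply: rcat_rid_append; left.
Qed.

Lemma rshape_total a u : normal u -> exists2 v, normal v & rshape a u v.
Proof.
case: a => [t|] N; last by exists u => //; apply: rid_refl.
by case: t; first [exact: rshape_total_a | exact: rshape_total_b | exact: rshape_total_c |
  exact: rshape_total_d].
Qed.

(** * Left multiplication *)

Definition lshape_b (b : gen) : wrel gen :=
  ror (rsingle [::] [:: b]) (ror (rapow [::] [:: ga] [:: ga] [:: b])
    (ror (rsingle [:: d_of (idx b)] [:: gb1; gd1])
         (rapow [::] [:: ga] [:: ga; d_of (idx b)] [:: gb1; gd1]))).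

Definition lshape_cbd (c : gen) j := rapow [::] [:: c_of j] [:: b_of (idx c); d_of j] [:: gb1; gd1].

Definition lshape_c (c : gen) : wrel gen :=
  ror (rsingle [::] [:: c]) (ror (rapow [::] [:: gc1] [:: b_of (idx c)] [:: gb1])
    (ror (lshape_cbd c 1) (ror (lshape_cbd c 2) (lshape_cbd c 3)))).

Definition lshape_local (t : gen) : wrel gen :=
  if isb t then lshape_b t else if isc t then lshape_c t else rsingle [::] [:: t].

Definition lshape (a : option gen) : wrel gen :=
  if a is Some t then rcat (lshape_local t) rid else rid.

Lemma lshape_b_sound b x y : isb b -> lshape_b b x y -> b :: x =M y.
Proof.
move=> bb; have bd : [:: b; d_of (idx b)] =M [:: gb1; gd1] by apply: eqM_bd; case: b bb.
case=> [[-> ->] | [/rapowP [k [-> ->]] | [[-> ->] | /rapowP [k [-> ->]]]]] //=.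
- exact: eqM_refl.
- by rewrite nseq_a_cons; apply: (eqM_b_apow_cat k.+1).
rewrite nseq_a_cons; apply: eqM_trans (eqM_b_apow_cat k.+1 _ bb) _.
exact: (eqM_cat (eqM_refl (nseq k.+1 ga)) bd).
Qed.

Lemma lshape_cbd_sound c j x y : isc c -> j \in [:: 1; 2; 3] -> lshape_cbd c j x y -> c :: x =M y.
Proof.
move=> cc j123 /rapowP [k [-> ->]] /=.
have [bc bcc] : isb (b_of (idx c)) /\ idx (b_of (idx c)) = idx c by case: c cc.
apply: eqM_trans (eqM_c_apow_b k _ bc cc bcc) _.
have dj : isd (d_of j) by move: j123; rewrite !inE => /or3P[] /eqP ->.
have jd : idx (d_of j) = j by move: j123; rewrite !inE => /or3P[] /eqP ->.
by have := eqM_c1_apow_b1_d k [::] dj; rewrite jd.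
Qed.

Lemma lshape_c_sound c x y : isc c -> lshape_c c x y -> c :: x =M y.
Proof.
move=> cc; case=> [[-> ->] | [/rapowP [k [-> ->]] | H]] /=.
- exact: eqM_refl.
- by apply: eqM_c_apow_b => //; case: c cc.
by case: H => [|[]] H; apply: lshape_cbd_sound H.
Qed.

Lemma lshape_local_sound t x y : lshape_local t x y -> t :: x =M y.
Proof.
rewrite /lshape_local; case: ifP => [tb | _]; first exact: lshape_b_sound.
case: ifP => [tc | _]; first exact: lshape_c_sound.
by move=> [-> ->]; apply: eqM_refl.
Qed.

Lemma lshape_sound a u v : lshape a u v -> letter a ++ u =M v.
Proof.
case: a => [t [x [p [y [_ [-> -> /lshape_local_sound E [_ ->]]]]]] | [_ ->]] /=.
  exact: (eqM_cat E (eqM_refl p)).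
exact: eqM_refl.
Qed.

Lemma regular_lshape a : regular (padlang (@deltaL gen) (lshape a)).
Proof.
case: a => [t|]; last exact: regular_padL_rdiag.
apply: regular_padL_rcat; [exact: size_preserving_diag | | exact: regular_padL_rdiag].
rewrite /lshape_local /lshape_b /lshape_c /lshape_cbd.
by case: ifP => _; [| case: ifP => _];
  repeat first [apply: regular_padlang_ror | apply: regular_padlang_rsingle |
                apply: regular_padL_rapow; by rewrite ?size_cat].
Qed.

Lemma lshape_lmul_b b k p : isb b -> no_lead_a p ->
  rcat (lshape_b b) rid (nseq k ga ++ p) (nseq k ga ++ lmul_b b p).
Proof.
move=> bb np.
have unchanged p' : rcat (lshape_b b) rid (nseq k ga ++ p') (nseq k ga ++ b :: p').
  case: k => [|k]; first by apply: (rcat_rid_rP (x := [::]) (y := [:: b])) => //; left.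
  apply: (rcat_rid_rP (x := [::] ++ nseq k ga ++ [:: ga])
                      (y := [:: ga] ++ nseq k ga ++ [:: b]) (p := p')).
  - by right; left; apply: rapow_intro.
  - by rewrite /= -catA nseq_a_cons.
  - by rewrite /= -catA.
case: p np => [|d q] np; first exact: unchanged.
rewrite /lmul_b; case: ifP => [/andP[/andP[dd /eqP db] _] | _]; last exact: unchanged.
have -> : d = d_of (idx b) by rewrite -db d_of_idx.
case: k {unchanged} => [|k].
  by apply: (rcat_rid_rP (x := [:: d_of (idx b)]) (y := [:: gb1; gd1])) => //; right; right; left.
apply: (rcat_rid_rP (x := [::] ++ nseq k ga ++ [:: ga; d_of (idx b)])
                    (y := [:: ga] ++ nseq k ga ++ [:: gb1; gd1]) (p := q)).
- by right; right; right; apply: rapow_intro.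
- by rewrite /= -catA nseq_a_cons.
- by rewrite /= -catA.
Qed.

Lemma lshape_cbd_idx c z x y : isd z -> lshape_cbd c (idx z) x y ->
  ror (lshape_cbd c 1) (ror (lshape_cbd c 2) (lshape_cbd c 3)) x y.
Proof. by case: z => // _ H; [left | right; left | right; right]. Qed.

Lemma lshape_lmul_c c k p : isc c -> no_lead_a p ->
  rcat (lshape_c c) rid (nseq k ga ++ p) (lmul_c c k p).
Proof.
move=> cc np; case: p np => [|y q] np.
  by apply: (rcat_rid_rP (x := [::]) (y := [:: c]) (p := nseq k ga)); rewrite ?cats0 //; left.
rewrite /lmul_c; case: ifP => [/andP[yb /eqP yc] | _]; last first.
  by apply: (rcat_rid_rP (x := [::]) (y := [:: c]) (p := nseq k ga ++ y :: q)) => //; left.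
have -> : y = b_of (idx c) by rewrite -yc b_of_idx.
case: q np => [|z q] np.
  apply: (rcat_rid_rP (x := [::] ++ nseq k ga ++ [:: b_of (idx c)])
                      (y := [:: gc1] ++ nseq k ga ++ [:: gb1]) (p := [::])); rewrite ?cats0 //.
  by right; left; apply: rapow_intro.
case: ifP => [/andP[zd _] | _].
  apply: (rcat_rid_rP (x := [::] ++ nseq k ga ++ [:: b_of (idx c); z])
                      (y := [:: c_of (idx z)] ++ nseq k ga ++ [:: gb1; gd1]) (p := q)).
  - right; right; apply: (lshape_cbd_idx zd); rewrite /lshape_cbd (d_of_idx zd).
    exact: (rapow_intro [::] [:: c_of (idx z)] [:: b_of (idx c); z] [:: gb1; gd1] k).
  - by rewrite /= -catA.
  - by rewrite /= -catA.
apply: (rcat_rid_rP (x := [::] ++ nseq k ga ++ [:: b_of (idx c)])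
                    (y := [:: gc1] ++ nseq k ga ++ [:: gb1]) (p := z :: q)).
- by right; left; apply: rapow_intro.
- by rewrite /= -catA.
- by rewrite /= -catA.
Qed.

Lemma lshape_lmul a u : lshape a u (if a is Some t then lmul t u else u).
Proof.
case: a => [t|]; last exact: rid_refl.
have [k [p [np ->]]] := apow_decomp u; rewrite lmul_apow_cat //= /lshape_local.
case: ifP => [tb | nb]; first by case: t tb => // _; apply: lshape_lmul_b.
case: ifP => [tc | nc]; first by case: t tc nb => // _ _; apply: lshape_lmul_c.
apply: (rcat_rid_rP (x := [::]) (y := [:: t]) (p := nseq k ga ++ p)) => //.
by case: t nb nc.
Qed.

Lemma regular_Lright a : regular (padlang (@deltaR gen) (Lright M_rel letters normal a)).
Proof.
apply: (padlang_ext (P := fun u v => normal u /\ normal v /\ u ++ letter a =M v)).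
  by move=> u v; rewrite /Lright !evalw_letters.
apply: regular_padlang_functional (@deltaR_fst _) (@deltaR_snd _) regular_normal
  (regular_rshape a) (@rshape_sound a) (@rshape_total a) _.
by move=> u v v' _ Nv Nv' E E'; apply: normal_unique (eqM_trans (eqM_sym E) E').
Qed.

Lemma regular_Lleft a : regular (padlang (@deltaL gen) (Lleft M_rel letters normal a)).
Proof.
apply: (padlang_ext (P := fun u v => normal u /\ normal v /\ letter a ++ u =M v)).
  by move=> u v; rewrite /Lleft !evalw_letters.
apply: regular_padlang_functional (@deltaL_fst _) (@deltaL_snd _) regular_normal
  (regular_lshape a) (@lshape_sound a) _ _.
  move=> u Nu; exists (if a is Some t then lmul t u else u); last exact: lshape_lmul.
  by case: a => // t; apply: normal_lmul.
by move=> u v v' _ Nv Nv' E E'; apply: normal_unique (eqM_trans (eqM_sym E) E').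
Qed.

Theorem proposition3p6 : biautomatic M_rel /\ automatic M_rel.
Proof.
apply: (biautomatic_of_length_preserving M_rel_size regular_normal _
  regular_Lright regular_Lleft).
move=> w; exists (nf w); rewrite evalw_letters.
by split; [apply: normal_nf | apply/eqM_sym/nf_sound].
Qed.
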